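(* Consider the discrete setting described in the context, with a fixed constant $\rho_\infty^*>0$, and let $(f^n_{ij},g^n_{ij})_{n\ge0,\,i\in\mathcal I,\,j\in\mathcal J}$ be a solution of the linearized scheme: for all $n\ge0$, $i\in\mathcal I$, $j\in\mathcal J$, $$\frac{f^{n+1}_{ij}-f^n_{ij}}{\Delta t}+\frac{1}{\Delta x\,\Delta v}\big(\mathcal F^{n+1}_{i+\frac12,j}-\mathcal F^{n+1}_{i-\frac12,j}\big)=-\rho_\infty^*\chi_{1,j}\rho^{n+1}_{g,i}-(\rho_\infty^* )^{-1}f^{n+1}_{ij},$$ $$\frac{g^{n+1}_{ij}-g^n_{ij}}{\Delta t}+\frac{1}{\Delta x\,\Delta v}\big(\mathcal G^{n+1}_{i+\frac12,j}-\mathcal G^{n+1}_{i-\frac12,j}\big)=-(\rho_\infty^* )^{-1}\chi_{2,j}\rho^{n+1}_{f,i}-\rho_\infty^*\,g^{n+1}_{ij}.$$ Then, writing $F^n=(f^n_{ij},g^n_{ij})_{i,j}$, for all $n\ge0$, $$\frac12\left(\|F^{n+1}\|_\Delta^2-\|F^n\|_\Delta^2\right)+\Delta t\,C^*_{mc}\,\|(I-\Pi^\Delta)F^{n+1}\|_\Delta^2\le 0,\qquad C^*_{mc}=\min\big((\rho_\infty^* )^{-1},\rho_\infty^*\big).$$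
   Context: Space mesh: the torus $\mathbb T$ is divided into $N$ uniform cells of length $\Delta x$, indexed by $i\in\mathcal I=\mathbb Z/N\mathbb Z$ (periodic indexing). Velocity mesh: for $v^*>0$ and an integer $L\ge1$, $\Delta v=v^*/L$, the $2L$ velocity cells of length $\Delta v$ partitioning $[-v^*,v^*]$ are indexed by $j\in\mathcal J=\{-L+1,\dots,L\}$ with midpoints $v_j=(j-\tfrac12)\Delta v$ (so $v_{1-j}=-v_j$). Time step $\Delta t>0$, $t^n=n\Delta t$; $\lambda=\Delta x/(2\Delta t)$ is a fixed positive constant. Discrete velocity profiles: for $k=1,2$, $(\chi_{k,j})_{j\in\mathcal J}$ with $\chi_{k,j}>0$, $\chi_{k,j}=\chi_{k,1-j}$, $\sum_{j}\Delta v\,\chi_{k,j}=1$, and $0<\underline D_k\le D_k^\Delta:=\sum_j\Delta v\,v_j^2\chi_{k,j}\le\overline D_k$, $Q_k^\Delta:=\sum_j\Delta v\,v_j^4\chi_{k,j}\le\overline Q_k$ for given constants. Densities: $\rho_{f,i}=\sum_j\Delta v\,f_{ij}$, $\rho_{g,i}=\sum_j\Delta v\,g_{ij}$. Lax–Friedrichs fluxes: $\mathcal F^{n+1}_{i+\frac12,j}=\Delta v\frac{v_j}{2}(f^{n+1}_{i+1,j}+f^{n+1}_{ij})-\Delta v\,\lambda(f^{n+1}_{i+1,j}-f^{n+1}_{ij})$, and $\mathcal G$ the same with $g$ in place of $f$. Weighted scalar product for $F_k=(f_{k,ij},g_{k,ij})_{i,j}$: $\langle F_1,F_2\rangle_\Delta=\sum_{i,j}\Delta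 x\,\Delta v\big(\frac{f_{1,ij}f_{2,ij}}{\chi_{1,j}\rho_\infty^*}+\frac{g_{1,ij}g_{2,ij}\rho_\infty^*}{\chi_{2,j}}\big)$ with norm $\|\cdot\|_\Delta$. Projection: $(\Pi^\Delta F)_{ij}=\frac{\rho_{f,i}-\rho_{g,i}}{(\rho_\infty^* )^2+1}\big((\rho_\infty^* )^2\chi_{1,j},\,-\chi_{2,j}\big)$. *)

From mathcomp Require Import all_boot all_order all_algebra.
From mathcomp Require Import reals.
Set Implicit Arguments. Unset Strict Implicit. Unset Printing Implicit Defensive.
Import Order.TTheory GRing.Theory Num.Theory.
Local Open Scope ring_scope.

(* Space index i : 'I_N (periodic: i+1 = ordS i, i-1 = ord_pred i).
   Velocity index k : 'I_(2*L) encodes the paper's j = k - L + 1 in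
   {-L+1,...,L}; hence v_j = (j - 1/2) dv = (k - L + 1/2) dv, and the
   symmetry j |-> 1 - j is k |-> rev_ord k. *)

Definition grid (R : realType) (N M : nat) := 'I_N -> 'I_M -> R.

Definition vel (R : realType) (L : nat) (dv : R) (k : 'I_(2 * L)) : R :=
  ((k : nat)%:R - L%:R + 2^-1) * dv.

Definition dens (R : realType) (N L : nat) (dv : R) (h : grid R N (2 * L))
  (i : 'I_N) : R := \sum_(k < 2 * L) dv * h i k.

(* Lax-Friedrichs flux at interface i + 1/2, lambda = dx / (2 dt) *)
Definition LFflux (R : realType) (N L : nat) (dx dv dt : R)
  (h : grid R N (2 * L)) (i : 'I_N) (k : 'I_(2 * L)) : R :=
  dv * (vel dv k / 2) * (h (ordS i) k + h i k)
  - dv * (dx / (2 * dt)) * (h (ordS i) k - h i k).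

Definition scheme (R : realType) (N L : nat) (dx dv dt rs : R)
  (chi1 chi2 : 'I_(2 * L) -> R) (f g : nat -> grid R N (2 * L)) : Prop :=
  forall (n : nat) (i : 'I_N) (k : 'I_(2 * L)),
    (f n.+1 i k - f n i k) / dt
      + (LFflux dx dv dt (f n.+1) i k - LFflux dx dv dt (f n.+1) (ord_pred i) k)
        / (dx * dv)
    = - rs * chi1 k * dens dv (g n.+1) i - rs^-1 * f n.+1 i k
  /\
    (g n.+1 i k - g n i k) / dt
      + (LFflux dx dv dt (g n.+1) i k - LFflux dx dv dt (g n.+1) (ord_pred i) k)
        / (dx * dv)
    = - rs^-1 * chi2 k * dens dv (f n.+1) i - rs * g n.+1 i k.

Definition dotD (R : realType) (N L : nat) (dx dv rs : R)
  (chi1 chi2 : 'I_(2 * L) -> R) (F1 F2 : grid R N (2 * L) * grid R N (2 * L)) : R :=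
  \sum_(i < N) \sum_(k < 2 * L)
     dx * dv * (F1.1 i k * F2.1 i k / (chi1 k * rs)
                + F1.2 i k * F2.2 i k * rs / chi2 k).

Definition normD (R : realType) (N L : nat) (dx dv rs : R)
  (chi1 chi2 : 'I_(2 * L) -> R) (F : grid R N (2 * L) * grid R N (2 * L)) : R :=
  Num.sqrt (dotD dx dv rs chi1 chi2 F F).

Definition PiD (R : realType) (N L : nat) (dv rs : R)
  (chi1 chi2 : 'I_(2 * L) -> R) (F : grid R N (2 * L) * grid R N (2 * L))
  : grid R N (2 * L) * grid R N (2 * L) :=
  ((fun i k => (dens dv F.1 i - dens dv F.2 i) / (rs ^+ 2 + 1) * (rs ^+ 2 * chi1 k)),
   (fun i k => (dens dv F.1 i - dens dv F.2 i) / (rs ^+ 2 + 1) * (- chi2 k))).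

Definition IminusPiD (R : realType) (N L : nat) (dv rs : R)
  (chi1 chi2 : 'I_(2 * L) -> R) (F : grid R N (2 * L) * grid R N (2 * L))
  : grid R N (2 * L) * grid R N (2 * L) :=
  ((fun i k => F.1 i k - (PiD dv rs chi1 chi2 F).1 i k),
   (fun i k => F.2 i k - (PiD dv rs chi1 chi2 F).2 i k)).

Definition profile (R : realType) (L : nat) (dv Dlo Dhi Qhi : R)
  (chi : 'I_(2 * L) -> R) : Prop :=
  (forall k, 0 < chi k) /\ (forall k, chi (rev_ord k) = chi k) /\
  \sum_(k < 2 * L) dv * chi k = 1 /\
  0 < Dlo /\ Dlo <= \sum_(k < 2 * L) dv * vel dv k ^+ 2 * chi k /\
  \sum_(k < 2 * L) dv * vel dv k ^+ 2 * chi k <= Dhi /\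
  \sum_(k < 2 * L) dv * vel dv k ^+ 4 * chi k <= Qhi.

(* Test the scheme against F^{n+1}: since |a|^2 - |b|^2 <= 2 <a - b, a>, the energy
   increment is at most 2 dt (<collision F, F> - <transport F, F>) with F = F^{n+1}.
   The Lax-Friedrichs transport term is nonnegative: on the periodic grid its centred
   part telescopes and its viscous part is dv lambda sum_i (h_{i+1} - h_i)^2.
   The collision term is computed cell by cell from the moments P = rho_f, Q = rho_g,
   A = sum dv f^2 / chi_1 and B = sum dv g^2 / chi_2: it equals
   -((A - P^2)/rs^2 + (B - Q^2) rs^2 + (P/rs + rs Q)^2), whereas the cell part of
   |(I - Pi) F|^2 is (A - P^2)/rs + (B - Q^2) rs + rs (P/rs + rs Q)^2 / (rs^2 + 1).
   Cauchy-Schwarz gives A >= P^2 and B >= Q^2, and a term-by-term comparison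
   produces the factor min(1/rs, rs). *)
From mathcomp Require Import all_boot all_order all_algebra.
From mathcomp Require Import reals ring lra.
Set Implicit Arguments. Unset Strict Implicit. Unset Printing Implicit Defensive.
Import Order.TTheory GRing.Theory Num.Theory.
Local Open Scope ring_scope.

Lemma periodic_flux_dot (R : comPzRingType) (N : nat) (alpha beta : R)
    (h Phi : 'I_N -> R) :
  (forall i, Phi i = alpha * (h (ordS i) + h i) - beta * (h (ordS i) - h i)) ->
  \sum_(i < N) (Phi i - Phi (ord_pred i)) * h i
    = beta * \sum_(i < N) (h (ordS i) - h i) ^+ 2.
Proof.
move=> Phi_def.
have shift_flux : \sum_(i < N) Phi (ord_pred i) * h i
                  = \sum_(i < N) Phi i * h (ordS i).
  by rewrite (reindex_inj (@ordS_inj N)); apply: eq_bigr => i _; rewrite ordSK.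
have shift_sqr : \sum_(i < N) h (ordS i) ^+ 2 = \sum_(i < N) h i ^+ 2.
  by rewrite [RHS](reindex_inj (@ordS_inj N)).
transitivity (beta * \sum_(i < N) (h (ordS i) - h i) ^+ 2
              + alpha * (\sum_(i < N) h i ^+ 2 - \sum_(i < N) h (ordS i) ^+ 2)).
  rewrite (eq_bigr (fun i => Phi i * h i - Phi (ord_pred i) * h i)); last first.
    by move=> i _; rewrite mulrBl.
  rewrite sumrB shift_flux -sumrB -sumrB !mulr_sumr -big_split /=.
  by apply: eq_bigr => i _; rewrite Phi_def; ring.
by rewrite shift_sqr subrr mulr0 addr0.
Qed.

Lemma LFflux_dot_ge0 (R : realType) (N L : nat) (dx dv dt : R)
    (h : grid R N (2 * L)) (k : 'I_(2 * L)) :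
  0 <= dx -> 0 <= dv -> 0 < dt ->
  0 <= \sum_(i < N) (LFflux dx dv dt h i k - LFflux dx dv dt h (ord_pred i) k) * h i k.
Proof.
move=> dx_ge0 dv_ge0 dt_gt0.
rewrite (@periodic_flux_dot _ _ (dv * (vel dv k / 2)) (dv * (dx / (2 * dt)))
           (h ^~ k) (LFflux dx dv dt h ^~ k)) //.
have visc_ge0 : 0 <= dv * (dx / (2 * dt)).
  by rewrite mulr_ge0 // divr_ge0 // mulr_ge0 // ltW.
by rewrite mulr_ge0 ?sumr_ge0 // => i _; rewrite sqr_ge0.
Qed.

Lemma sqr_sum_le_weighted (R : realFieldType) (I : finType) (w chi a : I -> R) :
  (forall k, 0 <= w k) -> (forall k, 0 < chi k) -> \sum_k w k * chi k = 1 ->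
  (\sum_k w k * a k) ^+ 2 <= \sum_k w k * (a k ^+ 2 / chi k).
Proof.
move=> w_ge0 chi_gt0 chi_norm.
set P := \sum_k w k * a k.
have var_ge0 : 0 <= \sum_k w k * ((a k - P * chi k) ^+ 2 / chi k).
  by apply: sumr_ge0 => k _; rewrite mulr_ge0 ?divr_ge0 ?sqr_ge0 ?(ltW (chi_gt0 k)).
suff var_def : \sum_k w k * ((a k - P * chi k) ^+ 2 / chi k)
               = \sum_k w k * (a k ^+ 2 / chi k) - P ^+ 2.
  by rewrite -subr_ge0 -var_def.
transitivity (\sum_k w k * (a k ^+ 2 / chi k) - 2 * P * \sum_k w k * a k
              + P ^+ 2 * \sum_k w k * chi k).
  rewrite (mulr_sumr _ _ _ (2 * P)) (mulr_sumr _ _ _ (P ^+ 2)) -sumrB -big_split /=.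
  apply: eq_bigr => k _.
  by field; rewrite gt_eqF.
by rewrite chi_norm -/P; ring.
Qed.

Lemma relaxation_le_dissipation (R : realFieldType) (rs m P Q A B : R) :
  0 < rs -> 0 <= m -> m <= rs^-1 -> m <= rs -> P ^+ 2 <= A -> Q ^+ 2 <= B ->
  m * (A / rs + rs * B - rs * (P - Q) ^+ 2 / (rs ^+ 2 + 1))
    <= 2 * P * Q + A / rs ^+ 2 + rs ^+ 2 * B.
Proof.
move=> rs_gt0 m_ge0 m_le_inv m_le_rs PA QB.
have rs_neq0 : rs != 0 by rewrite gt_eqF.
have rs21_gt0 : 0 < rs ^+ 2 + 1 by rewrite ltr_pwDr ?sqr_ge0.
set E := (P / rs + rs * Q) ^+ 2.
have -> : A / rs + rs * B - rs * (P - Q) ^+ 2 / (rs ^+ 2 + 1)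
          = rs^-1 * (A - P ^+ 2) + rs * (B - Q ^+ 2) + rs / (rs ^+ 2 + 1) * E.
  by rewrite /E; field; rewrite rs_neq0 gt_eqF.
have -> : 2 * P * Q + A / rs ^+ 2 + rs ^+ 2 * B
          = rs^-1 * (rs^-1 * (A - P ^+ 2)) + rs * (rs * (B - Q ^+ 2)) + E.
  by rewrite /E; field.
have E_ge0 : 0 <= E by rewrite sqr_ge0.
have m_rs_le1 : m * rs <= 1 by rewrite -(mulVf rs_neq0) ler_pM2r.
rewrite mulrDr mulrDr; apply: lerD; first apply: lerD.
- by apply: ler_wpM2r => //; rewrite mulr_ge0 // ?invr_ge0 ?subr_ge0 // ltW.
- by apply: ler_wpM2r => //; rewrite mulr_ge0 // ?subr_ge0 // ltW.
- rewrite mulrA; apply: ler_piMl => //.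
  rewrite mulrA ler_pdivrMr // mul1r.
  have := sqr_ge0 rs; lra.
Qed.

Section CellCollision.

Variables (R : realFieldType) (I : finType) (dv rs : R) (chi1 chi2 a c : I -> R).
Hypotheses (rs_gt0 : 0 < rs)
  (chi1_gt0 : forall k, 0 < chi1 k) (chi2_gt0 : forall k, 0 < chi2 k).

Let P := \sum_k dv * a k.
Let Q := \sum_k dv * c k.
Let A := \sum_k dv * (a k ^+ 2 / chi1 k).
Let B := \sum_k dv * (c k ^+ 2 / chi2 k).

Lemma collision_cell_dot :
  \sum_k dv * ((- rs * chi1 k * Q - rs^-1 * a k) * a k / (chi1 k * rs)
               + (- rs^-1 * chi2 k * P - rs * c k) * c k * rs / chi2 k)
  = - (2 * P * Q + A / rs ^+ 2 + rs ^+ 2 * B).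
Proof.
transitivity (- (Q * P + P * Q + A / rs ^+ 2 + rs ^+ 2 * B)); last by ring.
rewrite /A /B (mulr_sumr _ _ _ Q) (mulr_sumr _ _ _ P) (mulr_sumr _ _ _ (rs ^+ 2)).
rewrite mulr_suml -!big_split -sumrN /=; apply: eq_bigr => k _.
by field; rewrite !gt_eqF.
Qed.

Hypotheses (chi1_norm : \sum_k dv * chi1 k = 1) (chi2_norm : \sum_k dv * chi2 k = 1).

Let u := (P - Q) / (rs ^+ 2 + 1).

Let relaxation_cell :=
  \sum_k dv * ((a k - u * (rs ^+ 2 * chi1 k)) * (a k - u * (rs ^+ 2 * chi1 k))
                 / (chi1 k * rs)
               + (c k - u * (- chi2 k)) * (c k - u * (- chi2 k)) * rs / chi2 k).

Lemma relaxation_cell_norm :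
  relaxation_cell = A / rs + rs * B - rs * (P - Q) ^+ 2 / (rs ^+ 2 + 1).
Proof.
transitivity (rs^-1 * A + rs * B - (2 * u * rs) * P + (2 * u * rs) * Q
              + (u ^+ 2 * rs ^+ 3) * \sum_k dv * chi1 k
              + (u ^+ 2 * rs) * \sum_k dv * chi2 k).
  rewrite /A /B /P /Q !mulr_sumr -sumrN -!big_split /=; apply: eq_bigr => k _.
  by field; rewrite !gt_eqF.
have rs21_neq0 : rs ^+ 2 + 1 != 0 by rewrite gt_eqF // ltr_pwDr ?sqr_ge0.
by rewrite chi1_norm chi2_norm /u; field; rewrite rs21_neq0 gt_eqF.
Qed.

Lemma collision_cell_coercive (m : R) :
  0 <= dv -> 0 <= m -> m <= rs^-1 -> m <= rs ->
  \sum_k dv * ((- rs * chi1 k * Q - rs^-1 * a k) * a k / (chi1 k * rs)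
               + (- rs^-1 * chi2 k * P - rs * c k) * c k * rs / chi2 k)
  + m * relaxation_cell <= 0.
Proof.
move=> dv_ge0 m_ge0 m_le_inv m_le_rs.
rewrite collision_cell_dot relaxation_cell_norm addrC subr_le0.
by apply: relaxation_le_dissipation => //; apply: sqr_sum_le_weighted.
Qed.

End CellCollision.

Section EnergyEstimate.

Variables (R : realType) (N L : nat) (dx dv dt rs : R) (chi1 chi2 : 'I_(2 * L) -> R).

Local Notation state := (grid R N (2 * L) * grid R N (2 * L))%type.
Local Notation dot := (dotD dx dv rs chi1 chi2).

(* In these terms [scheme] reads
   (F^{n+1} - F^n) / dt + transport F^{n+1} = collision F^{n+1}. *)
Definition transport (F : state) : state :=
  (fun i k => (LFflux dx dv dt F.1 i k - LFflux dx dv dt F.1 (ord_pred i) k) / (dx * dv),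
   fun i k => (LFflux dx dv dt F.2 i k - LFflux dx dv dt F.2 (ord_pred i) k) / (dx * dv)).

Definition collision (F : state) : state :=
  (fun i k => - rs * chi1 k * dens dv F.2 i - rs^-1 * F.1 i k,
   fun i k => - rs^-1 * chi2 k * dens dv F.1 i - rs * F.2 i k).

Hypotheses (dx_gt0 : 0 < dx) (dv_gt0 : 0 < dv) (rs_gt0 : 0 < rs)
  (chi1_gt0 : forall k, 0 < chi1 k) (chi2_gt0 : forall k, 0 < chi2 k).

Lemma dotD_ge0 (F : state) : 0 <= dot F F.
Proof.
apply/sumr_ge0 => i _; apply/sumr_ge0 => k _.
have [[c1 c2] r] := (ltW (chi1_gt0 k), ltW (chi2_gt0 k), ltW rs_gt0).
rewrite -!expr2 mulr_ge0 ?mulr_ge0 ?(ltW dx_gt0) ?(ltW dv_gt0) //.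
apply: addr_ge0; first by rewrite divr_ge0 ?sqr_ge0 ?mulr_ge0.
by rewrite divr_ge0 // mulr_ge0 ?sqr_ge0.
Qed.

Lemma dotD_scale_sub_l (s : R) (X Y Z W : state) :
  (forall i k, X.1 i k = s * (Y.1 i k - Z.1 i k)) ->
  (forall i k, X.2 i k = s * (Y.2 i k - Z.2 i k)) ->
  dot X W = s * (dot Y W - dot Z W).
Proof.
move=> X1 X2; rewrite /dotD -sumrB mulr_sumr; apply: eq_bigr => i _.
by rewrite -sumrB mulr_sumr; apply: eq_bigr => k _; rewrite X1 X2; ring.
Qed.

Lemma dotD_sqr_sub_le (F G X : state) :
  (forall i k, X.1 i k = F.1 i k - G.1 i k) ->
  (forall i k, X.2 i k = F.2 i k - G.2 i k) ->
  dot F F - dot G G <= 2 * dot X F.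
Proof.
move=> X1 X2; rewrite -subr_ge0.
suff -> : 2 * dot X F - (dot F F - dot G G) = dot X X by apply: dotD_ge0.
rewrite /dotD -sumrB mulr_sumr -sumrB; apply: eq_bigr => i _.
rewrite -sumrB mulr_sumr -sumrB; apply: eq_bigr => k _; rewrite !X1 !X2 /=.
by field; rewrite !gt_eqF.
Qed.

Lemma transport_dot_ge0 (F : state) : 0 < dt -> 0 <= dot (transport F) F.
Proof.
move=> dt_gt0; rewrite /dotD exchange_big /=; apply: sumr_ge0 => k _.
have [c1 c2] := (chi1_gt0 k, chi2_gt0 k).
pose flux_dot h :=
  \sum_(i < N) (LFflux dx dv dt h i k - LFflux dx dv dt h (ord_pred i) k) * h i k.
have -> : \sum_(i < N) dx * dv * ((transport F).1 i k * F.1 i k / (chi1 k * rs)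
                                  + (transport F).2 i k * F.2 i k * rs / chi2 k)
          = (chi1 k * rs)^-1 * flux_dot F.1 + rs / chi2 k * flux_dot F.2.
  rewrite /flux_dot !mulr_sumr -big_split /=; apply: eq_bigr => i _.
  by field; rewrite !gt_eqF.
by rewrite addr_ge0 // mulr_ge0 ?LFflux_dot_ge0 ?invr_ge0 ?divr_ge0 ?mulr_ge0 ?ltW.
Qed.

Lemma collision_dot_coercive (F : state) (m : R) :
  \sum_(k < 2 * L) dv * chi1 k = 1 -> \sum_(k < 2 * L) dv * chi2 k = 1 ->
  0 <= m -> m <= rs^-1 -> m <= rs ->
  dot (collision F) F
    + m * dot (IminusPiD dv rs chi1 chi2 F) (IminusPiD dv rs chi1 chi2 F) <= 0.
Proof.
move=> chi1_norm chi2_norm m_ge0 m_le_inv m_le_rs.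
rewrite /dotD mulr_sumr -big_split /=; apply: sumr_le0 => i _.
have dx_out (X : 'I_(2 * L) -> R) :
    \sum_(k < 2 * L) dx * dv * X k = dx * \sum_(k < 2 * L) dv * X k.
  by rewrite mulr_sumr; apply: eq_bigr => k _; rewrite mulrA.
rewrite !dx_out mulrCA -mulrDr pmulr_rle0 // /dens.
exact: collision_cell_coercive (ltW dv_gt0) m_ge0 m_le_inv m_le_rs.
Qed.

Lemma scheme_energy_step (f g : nat -> grid R N (2 * L)) (n : nat) :
  0 < dt -> scheme dx dv dt rs chi1 chi2 f g ->
  dot (f n.+1, g n.+1) (f n.+1, g n.+1) - dot (f n, g n) (f n, g n)
    <= 2 * dt * (dot (collision (f n.+1, g n.+1)) (f n.+1, g n.+1)
                 - dot (transport (f n.+1, g n.+1)) (f n.+1, g n.+1)).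
Proof.
move=> dt_gt0 sch; have dt_neq0 : dt != 0 by rewrite gt_eqF.
pose X := (fun i k => f n.+1 i k - f n i k, fun i k => g n.+1 i k - g n i k).
rewrite -mulrA -(@dotD_scale_sub_l _ X); first exact: dotD_sqr_sub_le.
- by move=> i k; have [ef _] := sch n i k; rewrite /= -ef addrK mulrC divfK.
- by move=> i k; have [_ eg] := sch n i k; rewrite /= -eg addrK mulrC divfK.
Qed.

End EnergyEstimate.

Theorem lemma4p1 (R : realType) (N L : nat) (vstar dx dv dt rs : R)
  (chi1 chi2 : 'I_(2 * L) -> R) (D1lo D1hi Q1hi D2lo D2hi Q2hi : R)
  (f g : nat -> grid R N (2 * L)) :
  (0 < N)%N -> (1 <= L)%N -> 0 < vstar -> dv = vstar / L%:R ->
  0 < dx -> 0 < dt -> 0 < rs ->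
  profile dv D1lo D1hi Q1hi chi1 -> profile dv D2lo D2hi Q2hi chi2 ->
  scheme dx dv dt rs chi1 chi2 f g ->
  forall n : nat,
    2^-1 * (normD dx dv rs chi1 chi2 (f n.+1, g n.+1) ^+ 2
            - normD dx dv rs chi1 chi2 (f n, g n) ^+ 2)
    + dt * Num.min rs^-1 rs
      * normD dx dv rs chi1 chi2
          (IminusPiD dv rs chi1 chi2 (f n.+1, g n.+1)) ^+ 2
    <= 0.
Proof.
move=> _ L_gt0 vstar_gt0 dv_def dx_gt0 dt_gt0 rs_gt0
  [chi1_gt0 [_ [chi1_norm _]]] [chi2_gt0 [_ [chi2_norm _]]] sch n.
have dv_gt0 : 0 < dv by rewrite dv_def divr_gt0 ?ltr0n.
have m_ge0 : 0 <= Num.min rs^-1 rs by rewrite le_min invr_ge0 !ltW.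
have m_le_inv : Num.min rs^-1 rs <= rs^-1 by rewrite ge_min lexx.
have m_le_rs : Num.min rs^-1 rs <= rs by rewrite ge_min lexx orbT.
have energy_le := scheme_energy_step dx_gt0 dv_gt0 rs_gt0 chi1_gt0 chi2_gt0 n dt_gt0 sch.
have transport_ge0 := transport_dot_ge0 dx_gt0 dv_gt0 rs_gt0 chi1_gt0 chi2_gt0
  (f n.+1, g n.+1) dt_gt0.
have := collision_dot_coercive dx_gt0 dv_gt0 rs_gt0 chi1_gt0 chi2_gt0
  (f n.+1, g n.+1) chi1_norm chi2_norm m_ge0 m_le_inv m_le_rs.
rewrite -(pmulr_rle0 _ dt_gt0) mulrDr mulrA /normD !sqr_sqrtr ?dotD_ge0 //.
have := mulr_ge0 (ltW dt_gt0) transport_ge0.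
lra.
Qed.
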